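(* Let $p,k\ge 0$ be integers and $n\ge (p+1)k$. For every $\alpha\in C_n(p,k)$ with $\alpha\ne\gamma_{n,k}$, the list $\mathcal{D}_p(\alpha)$ ends with $\gamma_{n,k}=0^{n-k}1^k$.
   Context: The weight of a binary word is its number of 1's. For integers $p,k\ge 0$ and $n\ge (p+1)k$, $C_n(p,k)$ is the set of binary words of length $n$ and weight $k$ such that every prefix contains at least $p$ times as many 0's as 1's (i.e. in every prefix, #0's $\ge p\cdot$ #1's). $\gamma_{n,k}=0^{n-k}1^k$. A homogeneous transposition of a binary word exchanges a 1 and a 0 such that no 1 occurs strictly between the two exchanged positions. For a set $S$ of binary words of the same length and weight and $\alpha\in S$, the list obtained by applying the greedy algorithm for $S$ to $\alpha$ is built as follows: start with the list $(\alpha)$; repeatedly, for the last word $w$ of the current list, among all words obtainable from $w$ by one homogeneous transposition that lie in $S$ and do not already occur in the list, choose the one obtained by transposing the leftmost possible 1 with (among transpositions of that 1) the leftmost possible 0, and append it; stop when no such word exists. $\mathcal{D}_p(\alpha)$ denotes the list obtained by applying the greedy algorithm for $C_n(p,k)$ to $\alpha\in C_n(p,k)$. *)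

(* Binary words are seq bool, with true = 1 and false = 0. *)
From mathcomp Require Import all_boot.
Set Implicit Arguments. Unset Strict Implicit. Unset Printing Implicit Defensive.

Definition word := seq bool.

Definition weight (w : word) : nat := count id w.
Definition zeros (w : word) : nat := count negb w.

Definition inC (n p k : nat) (w : word) : bool :=
  [&& size w == n, weight w == k &
      all (fun m => p * weight (take m w) <= zeros (take m w)) (iota 0 n.+1)].

Definition gamma (n k : nat) : word := nseq (n - k) false ++ nseq k true.

Definition swap (w : word) (i j : nat) : word :=
  set_nth false (set_nth false w i false) j true.

Definition between (i j : nat) : seq nat :=
  iota (minn i j).+1 ((maxn i j - minn i j).-1).

Definition homtrans (w : word) (i j : nat) : bool :=
  [&& i < size w, j < size w, nth false w i, ~~ nth false w j &
      all (fun m => ~~ nth false w m) (between i j)].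

Definition greedy_next (S : pred word) (L : seq word) (w : word) : option word :=
  let n := size w in
  let cands := [seq swap w ij.1 ij.2 |
                 ij <- [seq (i, j) | i <- iota 0 n, j <- iota 0 n] &
                 [&& homtrans w ij.1 ij.2, S (swap w ij.1 ij.2) &
                     swap w ij.1 ij.2 \notin L]] in
  if cands is w' :: _ then Some w' else None.

Fixpoint greedy_aux (S : pred word) (fuel : nat) (L : seq word) (a : word)
  : seq word :=
  match fuel with
  | 0 => L
  | f.+1 =>
    match greedy_next S L (last a L) with
    | None => L
    | Some w' => greedy_aux S f (rcons L w') a
    end
  end.

(* All words in the list are
   distinct and of length size alpha, so at most 2^(size alpha) words occur;
   the fuel 2^(size alpha) is therefore enough for the process to stop. *)
Definition greedy (S : pred word) (alpha : word) : seq word :=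
  greedy_aux S (2 ^ size alpha) [:: alpha] alpha.

Definition Dp (n p k : nat) (alpha : word) : seq word :=
  greedy (inC n p k) alpha.

(* Induction on n, splitting off the last letter of alpha.

   If alpha = y1, the greedy list of alpha is that of y (in C_n(p,k-1)) with a 1 appended
   to every word: transpositions moving a 1 into the last position are impossible, those
   moving the last 1 come after every transposition inside y in the greedy order, and at
   gamma_{n,k-1}1 they are blocked by the 1 in position n-1.

   If alpha = y0, the greedy list of alpha is that of y with a 0 appended, until the list of
   y gets stuck at some word E.  Then the only new transposition, which moves the last 1 of
   E into the final position, is taken: it yields E'1 with E' in C_n(p,k-1) and E' ending
   in 0, so that the first case takes over and the list ends at gamma_{n,k-1}1 = gamma_{n+1,k}.
   When k = 1 the word E'1 = 0^n 1 is already gamma_{n+1,1}, and the list stops there: every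
   neighbour 0^j 1 0^(n-j) of it has been visited, being E or a neighbour of the stuck E. *)

From mathcomp Require Import all_boot zify.
Set Implicit Arguments. Unset Strict Implicit. Unset Printing Implicit Defensive.

(** * The lexicographically first candidate *)

Section FirstInSortedSeq.

Variables (T : eqType) (lt : rel T) (P : pred T).
Hypothesis lt_asym : forall x y, lt x y -> ~~ lt y x.

Let lt_irr x : lt x x = false.
Proof. by apply/negP => lt_xx; have := lt_asym lt_xx; rewrite lt_xx. Qed.

Lemma ohead_filter_sortedP s x : pairwise lt s ->
  ohead (filter P s) = Some x <->
  [/\ x \in s, P x & forall y, y \in s -> lt y x -> ~~ P y].
Proof.
move=> lt_s; have := pairwise_filter P lt_s.
have := mem_filter P ^~ s.
case: (filter P s) => [|z t] /= mem_Ps.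
  by split=> // [[xs Px _]]; have := mem_Ps x; rewrite Px xs.
case/andP=> lt_z _; have /andP [Pz zs] : P z && (z \in s) by rewrite -mem_Ps mem_head.
split=> [[<-] | [xs Px min_x]].
- split=> // y ys lt_yz; apply/negP => Py.
  have := mem_Ps y; rewrite Py ys inE => /orP [/eqP eq_yz | yt].
    by rewrite eq_yz lt_irr in lt_yz.
  by have := lt_asym (allP lt_z y yt); rewrite lt_yz.
- have := mem_Ps x; rewrite Px xs inE => /orP [/eqP -> // | xt].
  by have := min_x z zs (allP lt_z x xt); rewrite Pz.
Qed.

Lemma ohead_filter_None s : ohead (filter P s) = None <-> {in s, forall y, ~~ P y}.
Proof.
split=> [E | /hasPn]; first by apply/hasPn; rewrite has_filter; case: (filter P s) E.
by rewrite has_filter negbK => /eqP ->.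
Qed.

End FirstInSortedSeq.

Definition pairs n := [seq (i, j) | i <- iota 0 n, j <- iota 0 n].

Definition lexlt (a b : nat * nat) := (a.1 < b.1) || (a.1 == b.1) && (a.2 < b.2).

Lemma lexlt_asym a b : lexlt a b -> ~~ lexlt b a.
Proof. by case: a b => i j [i' j']; rewrite /lexlt /=; case: eqP; case: eqP; lia. Qed.

Lemma mem_pairs n i j : ((i, j) \in pairs n) = (i < n) && (j < n).
Proof.
apply/allpairsP/andP => [[[x y] /= [+ + [-> ->]]] | [lt_in lt_jn]].
  by rewrite !mem_iota; lia.
by exists (i, j); rewrite !mem_iota.
Qed.

Lemma pairwise_lexlt_pairs n : pairwise lexlt (pairs n).
Proof.
suff gen a m : pairwise lexlt [seq (i, j) | i <- iota a m, j <- iota 0 n] by exact: gen.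
elim: m a => [|m IH] a //=.
rewrite pairwise_cat IH andbT pairwise_map; apply/andP; split.
  apply/allrelP => x y /mapP [j _ ->] /allpairsP [[u v] /= [+ _ ->]].
  by rewrite mem_iota /lexlt /=; lia.
have : pairwise ltn (iota 0 n) by rewrite -sorted_pairwise ?iota_ltn_sorted //; exact: ltn_trans.
by apply: sub_pairwise => x y /= lt_xy; rewrite /lexlt /= eqxx lt_xy orbT.
Qed.

(** * Greedy steps and runs *)

Definition cand (S : pred word) (L : seq word) (w : word) (ij : nat * nat) :=
  [&& homtrans w ij.1 ij.2, S (swap w ij.1 ij.2) & swap w ij.1 ij.2 \notin L].

Definition first_cand S L w := ohead (filter (cand S L w) (pairs (size w))).

Lemma greedy_nextE S L w :
  greedy_next S L w = omap (fun ij => swap w ij.1 ij.2) (first_cand S L w).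
Proof. by rewrite /greedy_next /first_cand /pairs /cand; case: filter. Qed.

Lemma first_candP S L w x :
  first_cand S L w = Some x <->
  [/\ x \in pairs (size w), cand S L w x &
      forall y, y \in pairs (size w) -> lexlt y x -> ~~ cand S L w y].
Proof. exact/ohead_filter_sortedP/pairwise_lexlt_pairs/lexlt_asym. Qed.

Lemma first_cand_None S L w :
  first_cand S L w = None <-> {in pairs (size w), forall y, ~~ cand S L w y}.
Proof. exact: ohead_filter_None. Qed.

Lemma greedy_next_new S L w v : greedy_next S L w = Some v -> S v && (v \notin L).
Proof.
rewrite greedy_nextE; case E: first_cand => [ij|] //= [<-].
by move/first_candP: E => [_ /and3P [_ -> ->] _].
Qed.

Lemma stuck_swap_mem S L w i j : greedy_next S L w = None ->
  homtrans w i j -> S (swap w i j) -> swap w i j \in L.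
Proof.
rewrite greedy_nextE; case E: first_cand => // _ ht S_sw; move/first_cand_None: E.
move/(_ (i, j)); rewrite mem_pairs /cand /= ht S_sw negbK; apply.
by case/and5P: ht => -> ->.
Qed.

Lemma last_nonnil (T : eqType) (x y : T) (s : seq T) : s != [::] -> last x s = last y s.
Proof. by case: s. Qed.

Lemma last_in (T : eqType) (x : T) (s : seq T) : s != [::] -> last x s \in s.
Proof. by case: s => // y s _; rewrite /= mem_last. Qed.

Definition greedy_step (S : pred word) (L : seq word) := greedy_next S L (last [::] L).

Inductive reach (S : pred word) : seq word -> seq word -> Prop :=
| reach_refl L : reach S L L
| reach_step L w L' : greedy_step S L = Some w -> reach S (rcons L w) L' -> reach S L L'.

Lemma reach_trans S L1 L2 L3 : reach S L1 L2 -> reach S L2 L3 -> reach S L1 L3.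
Proof. by elim=> // L w L' next_w _ IH /IH; exact: reach_step. Qed.

Lemma reach_rcons S L L' w :
  reach S L L' -> greedy_step S L' = Some w -> reach S L (rcons L' w).
Proof. by move=> R next_w; apply: (reach_trans R); apply: reach_step next_w (reach_refl _ _). Qed.

Lemma reach_nonnil S L L' : reach S L L' -> L != [::] -> L' != [::].
Proof. by elim=> // L0 w L1 _ _ IH _; apply: IH; case: (L0). Qed.

Lemma next_uniq_all S L w : uniq L -> all S L -> greedy_step S L = Some w ->
  uniq (rcons L w) && all S (rcons L w).
Proof.
move=> UL AL /greedy_next_new /andP [Sw wL].
by rewrite rcons_uniq wL UL all_rcons Sw AL.
Qed.

Lemma reach_uniq_all S L L' : reach S L L' -> uniq L -> all S L -> uniq L' && all S L'.
Proof.
elim=> [L0 -> -> // | L0 w L1 next_w _ IH] UL AL.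
by have /andP [] := next_uniq_all UL AL next_w; exact: IH.
Qed.

Lemma size_uniq_words n (s : seq word) :
  uniq s -> (forall w, w \in s -> size w = n) -> size s <= 2 ^ n.
Proof.
move=> Us size_s; rewrite -[2]card_bool -card_tuple -(size_codom (@tval n bool)).
apply: uniq_leq_size => // w /size_s /eqP size_w.
by rewrite -[w]/(tval (Tuple size_w)) codom_f.
Qed.

Section Termination.

Variables (S : pred word) (n : nat).
Hypothesis size_S : forall w, S w -> size w = n.

Let size_uniq_all L : uniq L -> all S L -> size L <= 2 ^ n.
Proof. by move=> UL /allP AL; apply: size_uniq_words UL _ => w /AL /size_S. Qed.

Lemma reach_terminal L : uniq L -> all S L -> exists2 L', reach S L L' & greedy_step S L' = None.
Proof.
move: {2}(2 ^ n - size L) (leqnn (2 ^ n - size L)) => d.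
elim: d L => [|d IH] L size_L UL AL;
  (case E: (greedy_step S L) => [w|]; last by exists L; first exact: reach_refl).
all: have /andP [U' A'] := next_uniq_all UL AL E.
all: have := size_uniq_all U' A'; rewrite size_rcons => bound.
  lia.
have [|L' R stuck] := IH (rcons L w) _ U' A'; first by rewrite size_rcons; lia.
by exists L' => //; exact: reach_step E R.
Qed.

Lemma greedy_aux_reach a L L' f : reach S L L' -> greedy_step S L' = None ->
  L != [::] -> size L' <= size L + f -> greedy_aux S f L a = L'.
Proof.
move=> R; elim: R f => [L0|L0 w L1 next_w R IH] f stuck nonnil_L0 size_L1.
  case: f {size_L1} => [|f] //=.
  by move: stuck; rewrite /greedy_step (last_nonnil a [::] nonnil_L0) => ->.
have : size (rcons L0 w) <= size L1.
  elim: R {IH next_w size_L1 stuck} => // L2 v L3 _ _; rewrite !size_rcons; lia.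
case: f size_L1 => [|f] size_L1 /=; rewrite size_rcons => size_L1'; first lia.
move: next_w; rewrite /greedy_step (last_nonnil a [::] nonnil_L0) => ->.
by apply: IH => //; [case: (L0) | rewrite size_rcons; lia].
Qed.

Lemma greedy_reach a L : S a -> reach S [:: a] L -> greedy_step S L = None -> greedy S a = L.
Proof.
move=> Sa R stuck; apply: greedy_aux_reach => //.
have /andP [UL AL] : uniq L && all S L by apply: reach_uniq_all R _ _; rewrite //= Sa.
by rewrite (size_S Sa) add1n ltnW // ltnS size_uniq_all.
Qed.

End Termination.

(** * Words of C_n(p,k) *)

Lemma mem_between i j m : (m \in between i j) = (minn i j < m < maxn i j).
Proof. by rewrite /between mem_iota; lia. Qed.

Lemma size_swap w i j : i < size w -> j < size w -> size (swap w i j) = size w.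
Proof. by move=> lt_i lt_j; rewrite /swap !size_set_nth; lia. Qed.

Lemma nth_swap w i j m :
  nth false (swap w i j) m = if m == j then true else if m == i then false else nth false w m.
Proof. by rewrite /swap nth_set_nth /= nth_set_nth. Qed.

Lemma swap_rcons w b i j : i < size w -> j < size w ->
  swap (rcons w b) i j = rcons (swap w i j) b.
Proof.
move=> lt_i lt_j; apply: (@eq_from_nth _ false).
  by rewrite size_rcons !size_swap ?size_rcons //; lia.
move=> m _; rewrite nth_swap !nth_rcons nth_swap size_swap //.
by case: (m =P j) => [->|]; [rewrite lt_j | case: (m =P i) => [->|]; rewrite ?lt_i].
Qed.

Lemma homtrans_rcons w b i j : i < size w -> j < size w ->
  homtrans (rcons w b) i j = homtrans w i j.
Proof.
move=> lt_i lt_j; rewrite /homtrans size_rcons !nth_rcons lt_i lt_j !ltnS !(ltnW lt_i, ltnW lt_j).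
congr [&& _, _, _, _ & _]; apply: eq_in_all => m; rewrite mem_between => lt_m.
by rewrite nth_rcons ifT //; lia.
Qed.

Lemma homtrans_rcons1_end w i : homtrans (rcons w true) i (size w) = false.
Proof. by apply/negP => /and5P [_ _ _]; rewrite nth_rcons ltnn eqxx. Qed.

Lemma homtrans_rcons0_end w i m : homtrans (rcons w false) i (size w) ->
  i < m < size w -> ~~ nth false w m.
Proof.
case/and5P=> _ _ _ _ /allP /(_ m) + lt_m; rewrite mem_between nth_rcons.
by rewrite ifT; [apply; lia | lia].
Qed.

Lemma weight_rcons u b : weight (rcons u b) = weight u + b.
Proof. by rewrite /weight -cats1 count_cat /= addn0. Qed.

Lemma zeros_rcons u b : zeros (rcons u b) = zeros u + ~~ b.
Proof. by rewrite /zeros -cats1 count_cat /= addn0. Qed.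

Lemma zerosE w : zeros w = size w - weight w.
Proof. by rewrite /zeros /weight -(count_predC id w) addKn. Qed.

Definition prefix_ok p (w : word) m := p * weight (take m w) <= zeros (take m w).

Lemma inCP n p k w :
  reflect [/\ size w = n, weight w = k & forall m, prefix_ok p w m] (inC n p k w).
Proof.
apply: (iffP and3P) => [[/eqP size_w /eqP weight_w /allP ok_w] | [size_w weight_w ok_w]].
  have ok_le m : m <= n -> prefix_ok p w m by move=> le_mn; apply: ok_w; rewrite mem_iota ltnS.
  split=> //; move=> m; case: (leqP m n) => [/ok_le // | lt_nm].
  by have := ok_le n (leqnn n); rewrite /prefix_ok !take_oversize ?size_w // ltnW.
by split; [apply/eqP | apply/eqP | apply/allP => m _; apply: ok_w].
Qed.

Lemma prefix_ok_rcons p u b :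
  (forall m, prefix_ok p (rcons u b) m) <->
  (forall m, prefix_ok p u m) /\ p * (weight u + b) <= zeros u + ~~ b.
Proof.
have take_short m : m <= size u -> take m (rcons u b) = take m u.
  by move=> le_m; rewrite -cats1 takel_cat.
have take_all m : size u < m -> take m (rcons u b) = rcons u b.
  by move=> lt_m; rewrite take_oversize // size_rcons.
split=> [ok_ub | [ok_u ok_end] m].
  split; last first.
    by have := ok_ub (size u).+1; rewrite /prefix_ok take_all // weight_rcons zeros_rcons.
  move=> m; case: (leqP m (size u)) => le_m.
    by have := ok_ub m; rewrite /prefix_ok take_short.
  have := ok_ub (size u); rewrite /prefix_ok take_short // !take_oversize //; lia.
case: (leqP m (size u)) => le_m; first by rewrite /prefix_ok take_short //; apply: ok_u.
by rewrite /prefix_ok take_all // weight_rcons zeros_rcons.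
Qed.

Lemma inC_rcons0 n p k u : inC n.+1 p k (rcons u false) = inC n p k u.
Proof.
apply/inCP/inCP; rewrite size_rcons weight_rcons addn0.
  by case=> [[size_u] weight_u /prefix_ok_rcons [ok_u _]].
case=> size_u weight_u ok_u; split=> //; first by rewrite size_u.
apply/prefix_ok_rcons; split=> //.
by have := ok_u (size u); rewrite /prefix_ok take_size /= addn0 addn1 => /leqW.
Qed.

Lemma inC_rcons1 n p k u :
  inC n.+1 p k.+1 (rcons u true) = inC n p k u && (p * k.+1 <= n - k).
Proof.
apply/inCP/andP; rewrite size_rcons weight_rcons addn1.
  case=> [[size_u] [weight_u] /prefix_ok_rcons [ok_u]].
  by rewrite zerosE size_u weight_u addn0 addn1; split=> //; apply/inCP.
case=> /inCP [size_u weight_u ok_u] ok_end; split; rewrite ?size_u ?weight_u //.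
by apply/prefix_ok_rcons; rewrite zerosE size_u weight_u addn0 addn1.
Qed.

Lemma nth_true_lt (w : word) r : nth false w r -> r < size w.
Proof. by apply: contraTT; rewrite -leqNgt => /(nth_default false) ->. Qed.

Lemma weight_gt0 (w : word) r : nth false w r -> 0 < weight w.
Proof.
by move=> w_r; rewrite -has_count; apply/(has_nthP false); exists r; rewrite ?nth_true_lt.
Qed.

Lemma homtrans_rcons1_from_end w j : nth false w (size w).-1 ->
  ~~ homtrans (rcons w true) (size w) j.
Proof.
move=> w_last; have pos_w := nth_true_lt w_last.
apply/negP => /and5P [_ +  _ + /allP between_j]; rewrite size_rcons ltnS => le_j.
rewrite nth_rcons; case: (ltnP j (size w).-1) => [lt_j | ge_j].
  have mem_last : (size w).-1 \in between (size w) j by rewrite mem_between; lia.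
  by have := between_j _ mem_last; rewrite nth_rcons ifT ?w_last.
have [-> | ->] : j = (size w).-1 \/ j = size w by lia.
  by rewrite ifT ?w_last //; lia.
by rewrite ltnn eqxx.
Qed.

Lemma swap_rcons0_end w r : r < size w ->
  swap (rcons w false) r (size w) = rcons (set_nth false w r false) true.
Proof.
move=> lt_r; apply: (@eq_from_nth _ false).
  by rewrite size_swap !size_rcons ?size_set_nth; lia.
move=> m _; rewrite nth_swap !nth_rcons size_set_nth nth_set_nth /=.
have -> : maxn r.+1 (size w) = size w by lia.
case: (m =P size w) => [-> | _]; first by rewrite ltnn.
by case: (m =P r) => [-> | _]; [rewrite lt_r | case: ifP].
Qed.

Lemma weight_take_le (u w : word) m : size u = size w ->
  (forall i, nth false u i -> nth false w i) -> weight (take m u) <= weight (take m w).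
Proof.
elim: u w m => [|a u IH] [|b w] // [|m] //= [size_uw] le_uw.
rewrite /weight /= -!/(weight _) leq_add ?IH // => [|i]; last exact: le_uw i.+1.
by have /= := le_uw 0; case: (a); case: (b) => // /(_ isT).
Qed.

Lemma prefix_ok_le p (u w : word) : size u = size w ->
  (forall i, nth false u i -> nth false w i) ->
  forall m, prefix_ok p w m -> prefix_ok p u m.
Proof.
move=> size_uw le_uw m; rewrite /prefix_ok !zerosE !size_take size_uw.
have le_m := weight_take_le m size_uw le_uw.
move=> /(leq_trans (leq_mul (leqnn p) le_m)); lia.
Qed.

Lemma inC_clear n p k w r : inC n p k w -> nth false w r ->
  inC n p k.-1 (set_nth false w r false).
Proof.
case/inCP=> size_w weight_w ok_w w_r; have lt_r := nth_true_lt w_r.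
have size_set : size (set_nth false w r false) = size w by rewrite size_set_nth; lia.
apply/inCP; split; first by rewrite size_set.
  by rewrite /weight count_set_nth_ltn // -/(weight w) weight_w w_r subn1 addn0.
move=> m; apply: (prefix_ok_le size_set) (ok_w m) => i.
by rewrite nth_set_nth /=; case: (i == r).
Qed.

Lemma nseq_rcons n (x : bool) : rcons (nseq n x) x = nseq n.+1 x.
Proof. by elim: n => //= n ->. Qed.

Lemma gamma_rcons1 n k : gamma n.+1 k.+1 = rcons (gamma n k) true.
Proof. by rewrite /gamma subSS rcons_cat nseq_rcons. Qed.

Lemma gamma0 n : gamma n 0 = nseq n false.
Proof. by rewrite /gamma subn0 cats0. Qed.

Lemma gamma_rcons0 n : gamma n.+1 0 = rcons (gamma n 0) false.
Proof. by rewrite !gamma0 nseq_rcons. Qed.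

Lemma inC_weight0 n p w : inC n p 0 w -> w = gamma n 0.
Proof.
case/inCP=> <- weight_w _; rewrite gamma0.
by elim: w weight_w => [|[] w IH] //= /IH {1}->.
Qed.

Lemma size_gamma n k : k <= n -> size (gamma n k) = n.
Proof. by move=> le_k; rewrite size_cat !size_nseq subnK. Qed.

Lemma nth_gamma_last n k : 0 < k <= n -> nth false (gamma n k) n.-1.
Proof. by move=> lt_k; rewrite /gamma nth_cat size_nseq ifF ?nth_nseq ?ifT //; lia. Qed.

Lemma inC_bound n p k w : inC n p k w -> p * k <= n - k.
Proof.
case/inCP=> size_w weight_w /(_ n).
by rewrite /prefix_ok take_oversize ?size_w // zerosE size_w weight_w.
Qed.

Lemma last_one (w : word) : has id w ->
  exists r, [/\ r < size w, nth false w r & forall m, r < m < size w -> ~~ nth false w m].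
Proof.
elim/last_ind: w => [|s [] IH] //.
  exists (size s); rewrite size_rcons nth_rcons ltnn eqxx; split=> // m; lia.
rewrite -cats1 has_cat orbF => /IH [r [lt_r s_r last_r]].
exists r; rewrite cats1 size_rcons nth_rcons lt_r ltnS (ltnW lt_r); split=> // m lt_m.
rewrite nth_rcons; case: ifP => [lt_ms | _]; first by apply: last_r; lia.
by case: ifP.
Qed.

Definition onehot n j : word := set_nth false (nseq n false) j true.

Lemma nth_onehot n j m : nth false (onehot n j) m = (m == j).
Proof. by rewrite /onehot nth_set_nth /= nth_nseq; case: (m == j) => //; case: ifP. Qed.

Lemma size_onehot n j : j < n -> size (onehot n j) = n.
Proof. by move=> lt_j; rewrite /onehot size_set_nth size_nseq; lia. Qed.

Lemma inC_weight1 n p w : inC n p 1 w -> exists2 r, r < n & w = onehot n r.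
Proof.
move=> w_C; have /inCP [size_w weight_w _] := w_C.
have [|r [lt_r w_r _]] := @last_one w; first by rewrite has_count -/(weight w) weight_w.
exists r; first by rewrite -size_w.
have := inC_weight0 (inC_clear w_C w_r); rewrite gamma0 => clear_w.
apply: (@eq_from_nth _ false); first by rewrite size_onehot -?size_w.
move=> m _; rewrite nth_onehot.
have := congr1 (nth false ^~ m) clear_w; rewrite /= nth_set_nth /= nth_nseq.
by case: (m =P r) => [-> | _] //; case: ifP.
Qed.

Lemma homtrans_onehot m r i j : r < m ->
  homtrans (onehot m r) i j = [&& i == r, j < m & j != r].
Proof.
move=> lt_r; rewrite /homtrans size_onehot // !nth_onehot.
case: (i =P r) => [-> | _]; rewrite ?andbF //= lt_r; case: (j < m) => //=.
case: (j =P r) => //= ne_jr; apply/allP => x; rewrite mem_between nth_onehot => lt_x.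
by apply/eqP => eq_xr; move: lt_x; rewrite eq_xr; lia.
Qed.

Lemma swap_onehot m r j : r < m -> j < m -> swap (onehot m r) r j = onehot m j.
Proof.
move=> lt_r lt_j; apply: (@eq_from_nth _ false); first by rewrite size_swap ?size_onehot.
by move=> x _; rewrite nth_swap !nth_onehot; case: (x =P j) => // _; case: (x =P r).
Qed.

Lemma onehot_rcons0 n j : j < n -> onehot n.+1 j = rcons (onehot n j) false.
Proof.
move=> lt_j; apply: (@eq_from_nth _ false); first by rewrite size_rcons !size_onehot // ltnW.
move=> x _; rewrite nth_rcons size_onehot // !nth_onehot.
by case: ltngtP => [// | lt_nx | ->]; apply/eqP; lia.
Qed.

Lemma gamma1_onehot n : gamma n.+1 1 = onehot n.+1 n.
Proof.
apply: (@eq_from_nth _ false).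
  by rewrite size_onehot // /gamma size_cat !size_nseq subn1 addn1.
move=> x _; rewrite /gamma subn1 nth_cat size_nseq nth_onehot nth_nseq.
by case: ltngtP => // [lt_xn | ->]; rewrite ?nth_nseq ?subnn // ifF //; lia.
Qed.

(** * Appending a letter *)

Section OneLetterExtension.

Variables (S S' : pred word) (L L' : seq word) (w : word) (b : bool).
Hypothesis cand_rcons : forall i j, i < size w -> j < size w ->
  cand S' L' (rcons w b) (i, j) = cand S L w (i, j).
Hypothesis no_cand_over_one : forall i m, i < m < size w -> nth false w m ->
  ~~ cand S' L' (rcons w b) (i, size w).

Lemma first_cand_rcons i0 j0 : i0 < size w -> j0 <= size w -> nth false w i0 ->
  cand S' L' (rcons w b) (i0, j0) ->
  (forall i j, i < size w -> j < size w -> lexlt (i, j) (i0, j0) -> ~~ cand S L w (i, j)) ->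
  first_cand S' L' (rcons w b) = Some (i0, j0).
Proof.
move=> lt_i0 le_j0 w_i0 cand0 min0; apply/first_candP.
rewrite size_rcons mem_pairs !ltnS le_j0 ltnW //; split=> // [[i j]].
rewrite mem_pairs !ltnS => /andP [le_i le_j] lt_ij.
have lt_i : i < size w by move: lt_ij; rewrite /lexlt /=; lia.
case: (ltnP j (size w)) => [lt_j | ge_j]; first by rewrite cand_rcons // min0.
have -> : j = size w by lia.
by apply: (no_cand_over_one (m := i0)) => //; move: lt_ij; rewrite /lexlt /=; lia.
Qed.

Lemma greedy_next_rcons v : greedy_next S L w = Some v ->
  greedy_next S' L' (rcons w b) = Some (rcons v b).
Proof.
rewrite !greedy_nextE; case E: first_cand => [[i0 j0]|] //= [<-].
move/first_candP: E => [+ cand0 min0]; rewrite mem_pairs => /andP [lt_i0 lt_j0].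
rewrite (@first_cand_rcons i0 j0) /= ?swap_rcons ?cand_rcons ?(ltnW lt_j0) //.
  by case/and3P: cand0 => /and5P [].
by move=> i j lt_i lt_j; apply: min0; rewrite mem_pairs lt_i.
Qed.

Lemma greedy_next_rcons_escape r : greedy_next S L w = None ->
  r < size w -> nth false w r -> cand S' L' (rcons w b) (r, size w) ->
  greedy_next S' L' (rcons w b) = Some (swap (rcons w b) r (size w)).
Proof.
rewrite !greedy_nextE; case E: first_cand => // _ lt_r w_r cand_r.
move/first_cand_None: E => stuck_w.
rewrite (@first_cand_rcons r (size w)) // => i j lt_i lt_j _.
by apply: stuck_w; rewrite mem_pairs lt_i.
Qed.

Lemma greedy_next_rcons_None : greedy_next S L w = None ->
  (forall i, ~~ cand S' L' (rcons w b) (i, size w)) ->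
  (forall j, ~~ cand S' L' (rcons w b) (size w, j)) ->
  greedy_next S' L' (rcons w b) = None.
Proof.
rewrite !greedy_nextE; case E: first_cand => // _ no_cand_to_end no_cand_from_end.
move/first_cand_None: E => stuck_w.
suff /first_cand_None -> :
  {in pairs (size (rcons w b)), forall y, ~~ cand S' L' (rcons w b) y} by [].
move=> [i j]; rewrite size_rcons mem_pairs !ltnS => /andP [le_i le_j].
case: (ltnP i (size w)) => lt_i; last by have -> : i = size w by lia.
case: (ltnP j (size w)) => lt_j; last by have -> : j = size w by lia.
by rewrite cand_rcons //; apply: stuck_w; rewrite mem_pairs lt_i.
Qed.

End OneLetterExtension.

Lemma cand_rcons0 n p k L w i j : i < size w -> j < size w ->
  cand (inC n.+1 p k) (map (rcons^~ false) L) (rcons w false) (i, j) =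
  cand (inC n p k) L w (i, j).
Proof.
move=> lt_i lt_j; rewrite /cand /= homtrans_rcons // swap_rcons //.
by rewrite inC_rcons0 (mem_map (rcons_injl false)).
Qed.

Lemma no_cand_over_one0 S L w i m : i < m < size w -> nth false w m ->
  ~~ cand S L (rcons w false) (i, size w).
Proof.
move=> lt_m w_m; apply/negP => /and3P [/= /homtrans_rcons0_end/(_ lt_m)].
by rewrite w_m.
Qed.

Lemma cand_rcons1 n p k L0 L w i j : i < size w -> j < size w ->
  p * k.+1 <= n - k -> (forall u, rcons u true \notin L0) ->
  cand (inC n.+1 p k.+1) (L0 ++ map (rcons^~ true) L) (rcons w true) (i, j) =
  cand (inC n p k) L w (i, j).
Proof.
move=> lt_i lt_j ok_end L0_rcons0; rewrite /cand /= homtrans_rcons // swap_rcons //.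
by rewrite inC_rcons1 ok_end andbT mem_cat (negbTE (L0_rcons0 _)) (mem_map (rcons_injl true)).
Qed.

Lemma no_cand_to_end1 S L w i : ~~ cand S L (rcons w true) (i, size w).
Proof. by rewrite /cand /= homtrans_rcons1_end. Qed.

Lemma rcons1_notin_map_rcons0 u (L : seq word) : rcons u true \notin map (rcons^~ false) L.
Proof. by apply/mapP => -[v _ /(congr1 (last false))]; rewrite !last_rcons. Qed.

Lemma last_cat_map (f : word -> word) (x : word) L0 L : L != [::] ->
  last x (L0 ++ map f L) = f (last [::] L).
Proof. by case: L => // y L _; rewrite last_cat /= last_map. Qed.

Lemma reach_lift S S' (f : word -> word) L0 :
  (forall L v, L != [::] -> all S L -> greedy_step S L = Some v ->
     greedy_step S' (L0 ++ map f L) = Some (f v)) ->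
  forall L L', reach S L L' -> L != [::] -> all S L ->
  reach S' (L0 ++ map f L) (L0 ++ map f L').
Proof.
move=> lift_next L L'; elim=> [L1 | L1 v L2 next_v _ IH] nonnil AL; first exact: reach_refl.
have /andP [Sv _] := greedy_next_new next_v.
apply: reach_step (lift_next _ _ nonnil AL next_v) _.
by rewrite rcons_cat -map_rcons; apply: IH; [case: (L1) | rewrite all_rcons Sv].
Qed.

Lemma reach_rcons0 n p k L L' : reach (inC n p k) L L' -> L != [::] -> all (inC n p k) L ->
  reach (inC n.+1 p k) (map (rcons^~ false) L) (map (rcons^~ false) L').
Proof.
apply: (reach_lift (L0 := [::])) => L1 v nonnil _.
rewrite /greedy_step !(last_cat_map _ _ [::]) //.
by apply: greedy_next_rcons => [i j | i m]; [exact: cand_rcons0 | exact: no_cand_over_one0].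
Qed.

Lemma reach_rcons1 n p k L0 L L' : p * k.+1 <= n - k -> (forall u, rcons u true \notin L0) ->
  reach (inC n p k) L L' -> L != [::] -> all (inC n p k) L ->
  reach (inC n.+1 p k.+1) (L0 ++ map (rcons^~ true) L) (L0 ++ map (rcons^~ true) L').
Proof.
move=> ok_end L0_rcons1; apply: reach_lift => L1 v nonnil _.
rewrite /greedy_step !last_cat_map //.
apply: greedy_next_rcons => [i j lt_i lt_j | i m _ _]; first by rewrite cand_rcons1.
exact: no_cand_to_end1.
Qed.

Lemma greedy_step_rcons1_None n p k L0 L : p * k.+1 <= n - k ->
  (forall u, rcons u true \notin L0) -> L != [::] ->
  greedy_step (inC n p k) L = None -> nth false (last [::] L) (size (last [::] L)).-1 ->
  greedy_step (inC n.+1 p k.+1) (L0 ++ map (rcons^~ true) L) = None.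
Proof.
move=> ok_end L0_rcons1 nonnil stuck last_one; rewrite /greedy_step last_cat_map //.
apply: (greedy_next_rcons_None (S := inC n p k) (L := L)) => // [i j lt_i lt_j | i | j].
- exact: cand_rcons1.
- exact: no_cand_to_end1.
by rewrite /cand /= (negbTE (homtrans_rcons1_from_end _ last_one)).
Qed.

Lemma greedy_step_rcons0_escape n p k L E r : L != [::] -> last [::] L = E ->
  inC n p k E -> greedy_step (inC n p k) L = None ->
  r < n -> nth false E r -> (forall m, r < m < n -> ~~ nth false E m) ->
  greedy_step (inC n.+1 p k) (map (rcons^~ false) L) =
    Some (rcons (set_nth false E r false) true).
Proof.
move=> nonnil last_L E_C stuck lt_r E_r last_r.
have /inCP [size_E weight_E _] := E_C; rewrite -size_E in lt_r last_r.
rewrite /greedy_step (last_cat_map _ _ [::]) // last_L -swap_rcons0_end //.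
apply: (greedy_next_rcons_escape (S := inC n p k) (L := L)) => // [i j | i m | | ].
- exact: cand_rcons0.
- exact: no_cand_over_one0.
- by rewrite -last_L.
rewrite /cand /= swap_rcons0_end // rcons1_notin_map_rcons0 andbT; apply/andP; split.
  rewrite /homtrans size_rcons !nth_rcons lt_r ltnS (ltnW lt_r) ltnSn ltnn eqxx E_r /=.
  by apply/allP => m; rewrite mem_between nth_rcons => lt_m; rewrite ifT ?last_r //; lia.
have [k' def_k] : exists k', k = k'.+1.
  by exists k.-1; rewrite prednK // -weight_E (weight_gt0 E_r).
rewrite def_k inC_rcons1 (inC_clear (k := k'.+1)) -?def_k //=.
by have := inC_bound E_C; rewrite def_k; lia.
Qed.

Lemma greedy_step_weight1_None n p L : L != [::] ->
  inC n p 1 (last [::] L) -> greedy_step (inC n p 1) L = None ->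
  greedy_step (inC n.+1 p 1) (rcons (map (rcons^~ false) L) (gamma n.+1 1)) = None.
Proof.
move=> nonnil last_C stuck; have [r lt_r last_L] := inC_weight1 last_C.
rewrite /greedy_step last_rcons greedy_nextE gamma1_onehot.
suff /first_cand_None -> : {in pairs (size (onehot n.+1 n)),
  forall y, ~~ cand (inC n.+1 p 1) (rcons (map (rcons^~ false) L) (onehot n.+1 n))
                 (onehot n.+1 n) y} by [].
move=> [i j] _; rewrite /cand /= homtrans_onehot //.
apply/and3P => -[/and3P [/eqP -> lt_j ne_jn]]; have {ne_jn} lt_jn : j < n by lia.
rewrite swap_onehot // onehot_rcons0 // inC_rcons0 mem_rcons inE negb_or.
rewrite (mem_map (rcons_injl false)) => C_j /andP [_ /negP]; apply.
case: (j =P r) => [-> | ne_jr]; first by rewrite -last_L last_in.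
have := stuck_swap_mem stuck (_ : homtrans (last [::] L) r j).
by rewrite last_L swap_onehot // homtrans_onehot // eqxx lt_jn; apply => //; apply/eqP.
Qed.

Definition runs_to (S : pred word) (L : seq word) (g : word) :=
  exists L', [/\ reach S L L', greedy_step S L' = None & last [::] L' = g].

Lemma reach_runs_to S L1 L2 g : reach S L1 L2 -> runs_to S L2 g -> runs_to S L1 g.
Proof. by move=> R [L' [R' stuck last_L']]; exists L'; split=> //; exact: reach_trans R'. Qed.

Lemma runs_to_rcons1 n p k L0 L : p * k.+1 <= n - k -> 0 < k <= n ->
  (forall u, rcons u true \notin L0) -> L != [::] -> all (inC n p k) L ->
  runs_to (inC n p k) L (gamma n k) ->
  runs_to (inC n.+1 p k.+1) (L0 ++ map (rcons^~ true) L) (gamma n.+1 k.+1).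
Proof.
move=> ok_end lt_k L0_rcons1 nonnil AL [L' [R stuck last_L']].
have nonnil' := reach_nonnil R nonnil.
exists (L0 ++ map (rcons^~ true) L'); split.
- exact: reach_rcons1.
- apply: greedy_step_rcons1_None => //; rewrite last_L' size_gamma ?nth_gamma_last //.
  by case/andP: lt_k.
- by rewrite last_cat_map // last_L' gamma_rcons1.
Qed.

Lemma runs_to_rcons0 n p k y :
  (forall u, inC n p k.-1 u -> u <> gamma n k.-1 ->
     runs_to (inC n p k.-1) [:: u] (gamma n k.-1)) ->
  inC n p k y -> 0 < k -> runs_to (inC n.+1 p k) [:: rcons y false] (gamma n.+1 k).
Proof.
move=> IH y_C pos_k; have size_C w : inC n p k w -> size w = n by case/inCP.
have [|Ly R stuck] := reach_terminal size_C (L := [:: y]) isT; first by rewrite /= y_C.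
have nonnil := reach_nonnil R isT.
have /andP [_ ALy] : uniq Ly && all (inC n p k) Ly.
  by apply: reach_uniq_all R _ _; rewrite //= y_C.
set E := last [::] Ly; have E_C : inC n p k E := allP ALy _ (last_in _ nonnil).
have /inCP [size_E weight_E _] := E_C.
have [|r [lt_r E_r last_r]] := @last_one E; first by rewrite has_count -/(weight E) weight_E.
rewrite size_E in lt_r last_r; set E' := set_nth false E r false.
have R1 : reach (inC n.+1 p k) [:: rcons y false]
                (map (rcons^~ false) Ly ++ map (rcons^~ true) [:: E']).
  rewrite cats1; apply: reach_rcons.
    by apply: reach_rcons0 R _ _; rewrite //= y_C.
  exact: greedy_step_rcons0_escape nonnil erefl E_C stuck lt_r E_r last_r.
apply: reach_runs_to R1 _; have E'_C : inC n p k.-1 E' := inC_clear E_C E_r.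
case: (ltnP 1 k) => [gt1_k | le1_k].
  have [k' def_k] : exists k', k = k'.+1 by exists k.-1; rewrite prednK.
  rewrite def_k in E'_C IH *; rewrite /= in E'_C IH.
  have lt_k' : 0 < k' <= n.
    by have := count_size id E; rewrite -/(weight E) weight_E size_E def_k; lia.
  apply: runs_to_rcons1; rewrite /= ?E'_C //.
  - by have := inC_bound E_C; rewrite def_k; lia.
  - by move=> u; exact: rcons1_notin_map_rcons0.
  apply: IH => // def_E'; have := nth_gamma_last lt_k'.
  rewrite -def_E' nth_set_nth /=; case: eqP => // ne_r.
  by rewrite (negbTE (last_r _ _)) //; lia.
have def_k : k = 1 by lia.
rewrite def_k in E'_C *; rewrite (inC_weight0 E'_C) /= -gamma_rcons1 cats1.
exists (rcons (map (rcons^~ false) Ly) (gamma n.+1 1)); split; rewrite ?last_rcons //.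
  exact: reach_refl.
by apply: greedy_step_weight1_None => //; rewrite -def_k.
Qed.

Lemma runs_to_gamma n p k alpha : inC n p k alpha -> alpha <> gamma n k ->
  runs_to (inC n p k) [:: alpha] (gamma n k).
Proof.
elim: n p k alpha => [|n IH] p k alpha.
  by case/inCP=> /size0nil -> <- _; rewrite /gamma.
case/lastP: alpha => [|y []] alpha_C ne_gamma; first by case/inCP: alpha_C.
  have /inCP [_ weight_y _] := alpha_C; rewrite weight_rcons addn1 in weight_y; subst k.
  move: alpha_C; rewrite inC_rcons1 => /andP [y_C ok_end].
  have ne_y : y <> gamma n (weight y).
    by move=> def_y; apply: ne_gamma; rewrite gamma_rcons1 -def_y.
  have pos_y : 0 < weight y.
    by rewrite lt0n; apply: contra_notN ne_y => /eqP w0; move: y_C; rewrite w0 => /inC_weight0.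
  have le_y : weight y <= n by have /inCP [<- _ _] := y_C; exact: count_size.
  apply: (runs_to_rcons1 (L0 := [::]) (L := [:: y])); rewrite /= ?y_C ?pos_y //.
  exact: IH.
rewrite inC_rcons0 in alpha_C.
have pos_k : 0 < k.
  rewrite lt0n; apply: contra_notN ne_gamma => /eqP k0; move: alpha_C.
  by rewrite k0 => /inC_weight0 ->; rewrite gamma_rcons0.
by apply: runs_to_rcons0 => // u; exact: IH.
Qed.

Theorem lemma3 (p k n : nat) (alpha : word) :
  (p.+1) * k <= n ->
  inC n p k alpha ->
  alpha <> gamma n k ->
  last alpha (Dp n p k alpha) = gamma n k.
Proof.
(* The bound (p+1)k <= n is already a consequence of alpha being in C_n(p,k) (inC_bound). *)
move=> _ alpha_C ne_gamma.
have [L [R stuck last_L]] := runs_to_gamma alpha_C ne_gamma.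
have size_C w : inC n p k w -> size w = n by case/inCP.
rewrite /Dp (greedy_reach size_C alpha_C R stuck) (last_nonnil _ [::]) ?last_L //.
exact: reach_nonnil R isT.
Qed.
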